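(* For every nonnegative integer $r$, $$\sum_{n=1}^{\infty}\frac{1}{(2n+1)(2n+2r+1)4^n}\frac{\binom{4n}{2n}}{\binom{2n+2r}{n+r}}=\frac{1}{2^{2r-1}}K(r)-\frac{1}{(2r+1)\binom{2r}{r}},$$ where $$K(r)=\frac{16^r}{(4r+1)\binom{4r}{2r}}\left(2+\sqrt{2}\sum_{k=0}^r \frac{\binom{4k}{2k}}{(4k-1)16^k}\right).$$ *)

From Stdlib Require Import Reals.
From Coquelicot Require Import Coquelicot.
Open Scope R_scope.

Definition binom (n k : nat) : R := Binomial.C n k.

Definition term (r n : nat) : R :=
  / ((2 * INR n + 1) * (2 * INR n + 2 * INR r + 1) * 4 ^ n)
  * (binom (4 * n) (2 * n) / binom (2 * n + 2 * r) (n + r)).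

Definition K (r : nat) : R :=
  16 ^ r / ((4 * INR r + 1) * binom (4 * r) (2 * r))
  * (2 + sqrt 2 * sum_f_R0 (fun k => binom (4 * k) (2 * k) / ((4 * INR k - 1) * 16 ^ k)) r).

From Stdlib Require Import Reals ZArith Lra Lia Psatz.
From Coquelicot Require Import Coquelicot.
Open Scope R_scope.

(* With the Wallis ratio c m := C(2m,m) / 4^m, the n-th summand (n >= 0) is
   c(2n) / (4^r c(n+r) (2n+1)(2n+2r+1)), and we sum from n = 0, the term n = 0
   being exactly the subtracted one.  For r = 0 the summand is the difference
   of consecutive values of -4 c(2n)/c(n).  For larger r, the combination
   (4r+3)(4r+5) term(r+1) - 2(r+1)(2r+1) term(r) telescopes against
   2n c(2n) / (4^r c(n+r) (2n+2r+1)); this matches the recurrence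
   (4r+3)(4r+5) K(r+1) = sqrt 2 + 8(r+1)(2r+1) K(r), so induction on r applies.  Both
   telescoping limits reduce to c(2n)/c(n) -> 1/sqrt 2, which follows from
   c(m)^2 (2m+1) decreasing and c(m)^2 2m increasing. *)

Lemma is_lim_seq_dist_le_inv (x : nat -> R) (l M : R) :
  (forall n, Rabs (x n - l) <= M / (INR n + 1)) -> is_lim_seq x l.
Proof.
  intros Hx.
  assert (Hinv : is_lim_seq (fun n => / (INR n + 1)) 0).
  { apply is_lim_seq_ext with (fun n => / INR (S n)).
    { intros n; now rewrite S_INR. }
    replace (Finite 0) with (Rbar_inv p_infty) by reflexivity.
    apply is_lim_seq_inv; [|discriminate].
    now apply (is_lim_seq_incr_1 INR p_infty), is_lim_seq_INR. }
  apply is_lim_seq_le_le with (fun n => l - M * / (INR n + 1))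
                              (fun n => l + M * / (INR n + 1)).
  - intros n. specialize (Hx n). apply Rabs_le_between in Hx. unfold Rdiv in Hx. lra.
  - replace (Finite l) with (Finite (l - M * 0)) by (f_equal; ring).
    apply is_lim_seq_minus'; [apply is_lim_seq_const|].
    apply is_lim_seq_mult'; [apply is_lim_seq_const | exact Hinv].
  - replace (Finite l) with (Finite (l + M * 0)) by (f_equal; ring).
    apply is_lim_seq_plus'; [apply is_lim_seq_const|].
    apply is_lim_seq_mult'; [apply is_lim_seq_const | exact Hinv].
Qed.

Lemma is_series_telescope (f h : nat -> R) (l : R) :
  (forall n, f n = h (S n) - h n) -> is_lim_seq h l -> is_series f (l - h O).
Proof.
  intros Hf Hh. unfold is_series. change (is_lim_seq (sum_n f) (l - h O)).
  apply is_lim_seq_ext with (fun N => h (S N) - h O).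
  { induction n as [|n IH].
    - now rewrite sum_O, Hf.
    - rewrite sum_Sn, <- IH, Hf. change (plus ?a ?b) with (a + b). ring. }
  apply is_lim_seq_minus'; [|apply is_lim_seq_const].
  now apply (is_lim_seq_incr_1 h l).
Qed.

Definition wallis (m : nat) : R := INR (fact (2 * m)) / INR (fact m) ^ 2 / 4 ^ m.

Lemma wallis_pos m : 0 < wallis m.
Proof.
  unfold wallis. pose proof (INR_fact_lt_0 (2 * m)). pose proof (INR_fact_lt_0 m).
  pose proof (pow_lt 4 m ltac:(lra)).
  apply Rdiv_lt_0_compat; [apply Rdiv_lt_0_compat|]; auto; nra.
Qed.

Lemma wallis_0 : wallis 0 = 1.
Proof. unfold wallis. simpl. field. Qed.

Lemma wallis_S m : wallis (S m) = wallis m * (2 * INR m + 1) / (2 * INR m + 2).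
Proof.
  unfold wallis. replace (2 * S m)%nat with (S (S (2 * m))) by lia.
  rewrite !fact_simpl, !mult_INR, !S_INR, mult_INR. simpl (INR 2).
  pose proof (INR_fact_lt_0 (2 * m)). pose proof (INR_fact_lt_0 m).
  pose proof (pow_lt 4 m ltac:(lra)). pose proof (pos_INR m).
  simpl pow. field. repeat split; lra.
Qed.

Lemma wallis_double_S n :
  wallis (2 * S n) = wallis (2 * n) * ((4 * INR n + 1) * (4 * INR n + 3))
                     / ((4 * INR n + 2) * (4 * INR n + 4)).
Proof.
  replace (2 * S n)%nat with (S (S (2 * n))) by lia.
  rewrite !wallis_S, S_INR, mult_INR. simpl (INR 2).
  pose proof (pos_INR n). field. lra.
Qed.

Lemma binom_central m : binom (2 * m) m = wallis m * 4 ^ m.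
Proof.
  unfold binom, Binomial.C, wallis. replace (2 * m - m)%nat with m by lia.
  pose proof (INR_fact_lt_0 m). pose proof (pow_lt 4 m ltac:(lra)).
  field. lra.
Qed.

Lemma binom_central_double k : binom (4 * k) (2 * k) = wallis (2 * k) * 16 ^ k.
Proof.
  replace (4 * k)%nat with (2 * (2 * k))%nat by lia.
  rewrite binom_central, pow_mult. f_equal. f_equal. ring.
Qed.

Lemma wallis_S_mul m : wallis (S m) * (2 * INR m + 2) = wallis m * (2 * INR m + 1).
Proof. rewrite wallis_S. pose proof (pos_INR m). field. lra. Qed.

Lemma wallis_sq_odd_decreasing : Un_decreasing (fun m => wallis m ^ 2 * (2 * INR m + 1)).
Proof.
  intros m. pose proof (wallis_S_mul m) as E. pose proof (pos_INR m).
  pose proof (pow2_ge_0 (wallis m)). rewrite S_INR.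
  apply (Rmult_le_reg_r ((2 * INR m + 2) ^ 2)); [nra|].
  replace (wallis (S m) ^ 2 * (2 * (INR m + 1) + 1) * (2 * INR m + 2) ^ 2)
    with ((wallis (S m) * (2 * INR m + 2)) ^ 2 * (2 * INR m + 3)) by ring.
  rewrite E. nra.
Qed.

Lemma wallis_sq_even_growing : Un_growing (fun m => wallis m ^ 2 * (2 * INR m)).
Proof.
  intros m. pose proof (wallis_S_mul m) as E. pose proof (pos_INR m).
  pose proof (pow2_ge_0 (wallis m)). rewrite S_INR.
  apply (Rmult_le_reg_r (2 * INR m + 2)); [lra|].
  replace (wallis (S m) ^ 2 * (2 * (INR m + 1)) * (2 * INR m + 2))
    with ((wallis (S m) * (2 * INR m + 2)) ^ 2) by ring.
  rewrite E. nra.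
Qed.

Lemma wallis_double_sq_le n :
  wallis (2 * n) ^ 2 * (4 * INR n + 1) <= wallis n ^ 2 * (2 * INR n + 1).
Proof.
  pose proof (decreasing_prop _ n (2 * n) wallis_sq_odd_decreasing ltac:(lia)) as H.
  cbv beta in H. rewrite mult_INR in H. simpl (INR 2) in H. lra.
Qed.

Lemma wallis_double_sq_ge n : wallis n ^ 2 <= 2 * wallis (2 * n) ^ 2.
Proof.
  destruct n as [|n].
  - rewrite Nat.mul_0_r, wallis_0. lra.
  - pose proof (growing_prop _ (2 * S n) (S n) wallis_sq_even_growing ltac:(lia)) as H.
    cbv beta in H. rewrite mult_INR in H. simpl (INR 2) in H.
    assert (0 < INR (S n)) by (apply lt_0_INR; lia).
    nra.
Qed.

Lemma wallis_double_ratio_lim :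
  is_lim_seq (fun n => wallis (2 * n) / wallis n) (sqrt 2 / 2).
Proof.
  apply is_lim_seq_dist_le_inv with 1. intros n.
  pose proof (sqrt_sqrt 2 ltac:(lra)) as Hs2.
  assert (Hs : 1 <= sqrt 2) by (pose proof (sqrt_pos 2); nra).
  pose proof (wallis_pos n). pose proof (wallis_pos (2 * n)). pose proof (pos_INR n).
  pose proof (wallis_double_sq_le n) as Hle. pose proof (wallis_double_sq_ge n) as Hge.
  set (D := wallis (2 * n) / wallis n).
  assert (HDpos : 0 < D) by (apply Rdiv_lt_0_compat; lra).
  assert (HD : wallis (2 * n) = D * wallis n) by (unfold D; field; lra).
  rewrite HD in Hle, Hge. clearbody D.
  assert (Hw : 0 < wallis n ^ 2) by (apply pow_lt; lra).
  assert (Hlow : 1 <= 2 * D ^ 2) by (apply (Rmult_le_reg_r _ _ _ Hw); lra).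
  assert (Hup : D ^ 2 * (4 * INR n + 1) <= 2 * INR n + 1)
    by (apply (Rmult_le_reg_r _ _ _ Hw); lra).
  set (s := sqrt 2) in *.
  assert (Hfactor : (D - s / 2) * (D + s / 2) = D ^ 2 - 1 / 2).
  { replace (D ^ 2 - 1 / 2) with (D ^ 2 - s * s / 4) by (rewrite Hs2; field). field. }
  assert (Hsd : s / 2 <= D) by nra.
  assert (Hdiff : D - s / 2 <= D ^ 2 - 1 / 2) by nra.
  assert (Hsq : (D ^ 2 - 1 / 2) * (2 * (4 * INR n + 1)) <= 1) by nra.
  rewrite Rabs_right by lra.
  apply (Rmult_le_reg_r (INR n + 1)); [lra|].
  unfold Rdiv. rewrite Rmult_assoc, Rinv_l by lra. nra.
Qed.

Lemma wallis_shift_ratio_lim r : is_lim_seq (fun n => wallis n / wallis (n + r)) 1.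
Proof.
  induction r as [|r IH].
  - apply is_lim_seq_ext with (fun _ => 1); [|apply is_lim_seq_const].
    intros n. rewrite Nat.add_0_r. pose proof (wallis_pos n). field. lra.
  - apply is_lim_seq_ext with
      (fun n => wallis n / wallis (n + r) * ((2 * INR (n + r) + 2) / (2 * INR (n + r) + 1))).
    { intros n. rewrite Nat.add_succ_r, wallis_S.
      pose proof (wallis_pos n). pose proof (wallis_pos (n + r)). pose proof (pos_INR (n + r)).
      field. lra. }
    replace (Finite 1) with (Finite (1 * 1)) by (f_equal; ring).
    apply is_lim_seq_mult'; [exact IH|].
    apply is_lim_seq_dist_le_inv with 1. intros n.
    pose proof (pos_INR n). pose proof (pos_INR r). rewrite plus_INR.
    replace ((2 * (INR n + INR r) + 2) / (2 * (INR n + INR r) + 1) - 1)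
      with (1 / (2 * (INR n + INR r) + 1)) by (field; lra).
    rewrite Rabs_right by (apply Rle_ge, Rlt_le, Rdiv_lt_0_compat; lra).
    unfold Rdiv. rewrite !Rmult_1_l. apply Rinv_le_contravar; lra.
Qed.

Lemma affine_ratio_lim (a : R) : 0 < a -> is_lim_seq (fun n => 2 * INR n / (2 * INR n + a)) 1.
Proof.
  intros Ha. apply is_lim_seq_dist_le_inv with (a + 1). intros n. pose proof (pos_INR n).
  replace (2 * INR n / (2 * INR n + a) - 1) with (- (a / (2 * INR n + a))) by (field; lra).
  rewrite Rabs_Ropp, Rabs_right by (apply Rle_ge, Rlt_le, Rdiv_lt_0_compat; lra).
  apply (Rmult_le_reg_r ((2 * INR n + a) * (INR n + 1))); [nra|].
  replace (a / (2 * INR n + a) * ((2 * INR n + a) * (INR n + 1)))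
    with (a * (INR n + 1)) by (field; lra).
  replace ((a + 1) / (INR n + 1) * ((2 * INR n + a) * (INR n + 1)))
    with ((a + 1) * (2 * INR n + a)) by (field; lra).
  nra.
Qed.

Definition potential (r n : nat) : R :=
  2 * INR n * wallis (2 * n) / (wallis (n + r) * 4 ^ r * (2 * INR n + 2 * INR r + 1)).

Lemma potential_0 r : potential r 0 = 0.
Proof. unfold potential. simpl INR. unfold Rdiv. ring. Qed.

Lemma potential_lim r : is_lim_seq (potential r) (/ 4 ^ r * (sqrt 2 / 2)).
Proof.
  pose proof (pos_INR r). pose proof (pow_lt 4 r ltac:(lra)).
  apply is_lim_seq_ext with (fun n => / 4 ^ r * (wallis (2 * n) / wallis n
      * (wallis n / wallis (n + r)) * (2 * INR n / (2 * INR n + (2 * INR r + 1))))).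
  { intros n. unfold potential.
    pose proof (wallis_pos n). pose proof (wallis_pos (n + r)). pose proof (pos_INR n).
    field. lra. }
  apply is_lim_seq_mult'; [apply is_lim_seq_const|].
  replace (sqrt 2 / 2) with (sqrt 2 / 2 * 1 * 1) by ring.
  apply is_lim_seq_mult'; [apply is_lim_seq_mult'|].
  - apply wallis_double_ratio_lim.
  - apply wallis_shift_ratio_lim.
  - apply affine_ratio_lim. lra.
Qed.

Lemma term_wallis r n :
  term r n = wallis (2 * n)
             / (wallis (n + r) * 4 ^ r * ((2 * INR n + 1) * (2 * INR n + 2 * INR r + 1))).
Proof.
  unfold term. replace (4 * n)%nat with (2 * (2 * n))%nat by lia.
  replace (2 * n + 2 * r)%nat with (2 * (n + r))%nat by lia.
  rewrite !binom_central, pow_add.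
  replace (4 ^ (2 * n)) with (4 ^ n * 4 ^ n) by (rewrite <- pow_add; f_equal; lia).
  pose proof (wallis_pos (2 * n)). pose proof (wallis_pos (n + r)).
  pose proof (pos_INR n). pose proof (pos_INR r).
  pose proof (pow_lt 4 r ltac:(lra)). pose proof (pow_lt 4 n ltac:(lra)).
  field. repeat split; lra.
Qed.

Lemma term_at_0 r : term r 0 = / ((2 * INR r + 1) * binom (2 * r) r).
Proof.
  rewrite term_wallis, Nat.mul_0_r, Nat.add_0_l, binom_central, wallis_0. simpl (INR 0).
  pose proof (wallis_pos r). pose proof (pos_INR r). pose proof (pow_lt 4 r ltac:(lra)).
  field. repeat split; nra.
Qed.

Lemma term_0_telescopes n :
  term 0 n = - 4 * (wallis (2 * S n) / wallis (S n)) + 4 * (wallis (2 * n) / wallis n).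
Proof.
  rewrite term_wallis, Nat.add_0_r, wallis_double_S, wallis_S.
  pose proof (wallis_pos (2 * n)). pose proof (wallis_pos n). pose proof (pos_INR n).
  simpl (INR 0). simpl (4 ^ 0). field. repeat split; lra.
Qed.

Lemma term_S_telescopes r n :
  (4 * INR r + 3) * (4 * INR r + 5) * term (S r) n
  = 2 * (INR r + 1) * (2 * INR r + 1) * term r n + (potential r (S n) - potential r n).
Proof.
  rewrite !term_wallis. unfold potential. rewrite wallis_double_S.
  rewrite Nat.add_succ_r, Nat.add_succ_l, wallis_S, !S_INR, plus_INR. simpl pow.
  pose proof (wallis_pos (2 * n)). pose proof (wallis_pos (n + r)).
  pose proof (pos_INR n). pose proof (pos_INR r). pose proof (pow_lt 4 r ltac:(lra)).
  field. repeat split; lra.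
Qed.

Lemma K_wallis r :
  K r = (2 + sqrt 2 * sum_f_R0 (fun k => wallis (2 * k) / (4 * INR k - 1)) r)
        / ((4 * INR r + 1) * wallis (2 * r)).
Proof.
  unfold K. rewrite binom_central_double.
  rewrite (sum_eq _ (fun k => wallis (2 * k) / (4 * INR k - 1))).
  2: { intros k _. rewrite binom_central_double.
       pose proof (pow_lt 16 k ltac:(lra)).
       assert (4 * INR k - 1 <> 0).
       { destruct k as [|k]; [simpl; lra|]. rewrite S_INR. pose proof (pos_INR k). lra. }
       field. split; lra. }
  pose proof (wallis_pos (2 * r)). pose proof (pos_INR r). pose proof (pow_lt 16 r ltac:(lra)).
  field. repeat split; lra.
Qed.

Lemma K_0 : K 0 = 2 - sqrt 2.
Proof. rewrite K_wallis. simpl. rewrite wallis_0. field. Qed.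

Lemma K_S r :
  (4 * INR r + 3) * (4 * INR r + 5) * K (S r)
  = sqrt 2 + 8 * (INR r + 1) * (2 * INR r + 1) * K r.
Proof.
  rewrite !K_wallis, tech5, wallis_double_S, !S_INR.
  pose proof (wallis_pos (2 * r)). pose proof (pos_INR r).
  field. repeat split; lra.
Qed.

Lemma is_series_term_0 : is_series (term 0) (2 * K 0 / 4 ^ 0).
Proof.
  set (h := fun n => - 4 * (wallis (2 * n) / wallis n)).
  replace (2 * K 0 / 4 ^ 0) with (- 4 * (sqrt 2 / 2) - h O).
  - apply is_series_telescope.
    + intros n. rewrite term_0_telescopes. unfold h. ring.
    + apply is_lim_seq_mult'; [apply is_lim_seq_const | apply wallis_double_ratio_lim].
  - unfold h. rewrite K_0, Nat.mul_0_r, wallis_0. simpl. field.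
Qed.

Lemma is_series_term_S r :
  is_series (term r) (2 * K r / 4 ^ r) -> is_series (term (S r)) (2 * K (S r) / 4 ^ S r).
Proof.
  intros Hr. pose proof (pos_INR r). pose proof (pow_lt 4 r ltac:(lra)).
  set (a := / ((4 * INR r + 3) * (4 * INR r + 5))).
  set (b := 2 * (INR r + 1) * (2 * INR r + 1) * a).
  pose proof (is_series_telescope _ _ _ (fun n => eq_refl) (potential_lim r)) as Hpot.
  pose proof (is_series_plus _ _ _ _ (is_series_scal a _ _ Hpot) (is_series_scal b _ _ Hr))
    as Hsum.
  cbv beta in Hsum. change (plus ?x ?y) with (x + y) in Hsum.
  change (scal ?x ?y) with (x * y) in Hsum.
  replace (2 * K (S r) / 4 ^ S r)
    with (a * (/ 4 ^ r * (sqrt 2 / 2) - potential r 0) + b * (2 * K r / 4 ^ r)).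
  - apply is_series_ext with (2 := Hsum). intros n.
    apply (Rmult_eq_reg_l ((4 * INR r + 3) * (4 * INR r + 5))); [|nra].
    rewrite term_S_telescopes. unfold b, a. field. lra.
  - apply (Rmult_eq_reg_l ((4 * INR r + 3) * (4 * INR r + 5))); [|nra].
    replace ((4 * INR r + 3) * (4 * INR r + 5) * (2 * K (S r) / 4 ^ S r))
      with ((4 * INR r + 3) * (4 * INR r + 5) * K (S r) / (2 * 4 ^ r)) by (simpl; field; lra).
    rewrite K_S, potential_0. unfold b, a. field. lra.
Qed.

Lemma is_series_term r : is_series (term r) (2 * K r / 4 ^ r).
Proof.
  induction r as [|r IH].
  - exact is_series_term_0.
  - exact (is_series_term_S r IH).
Qed.

Lemma inv_powerRZ_2_double_pred r : / powerRZ 2 (2 * Z.of_nat r - 1) = 2 / 4 ^ r.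
Proof.
  replace (2 * Z.of_nat r - 1)%Z with (Z.of_nat (2 * r) + (-1))%Z by lia.
  rewrite powerRZ_add, <- pow_powerRZ, pow_mult by lra.
  replace (powerRZ 2 (-1)) with (/ 2) by (simpl; field). replace (2 ^ 2) with 4 by ring.
  field. apply pow_nonzero. lra.
Qed.

Theorem theorem4p0p1 (r : nat) :
  is_series (fun m : nat => term r (S m))
    (/ powerRZ 2 (2 * Z.of_nat r - 1)%Z * K r - / ((2 * INR r + 1) * binom (2 * r) r)).
Proof.
  rewrite inv_powerRZ_2_double_pred, <- term_at_0.
  apply is_series_incr_1. change (plus ?x ?y) with (x + y).
  replace (2 / 4 ^ r * K r - term r 0 + term r 0) with (2 * K r / 4 ^ r) by (unfold Rdiv; ring).
  apply is_series_term.
Qed.
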